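(* Let $n\ge2$ and let $\sum_{l=0}^\infty a_lu^l$ be a power series in the polar $n$-complex variable $u$ with polar $n$-complex coefficients $a_l=\sum_{p=0}^{n-1}h_pa_{lp}$. Put $A_{l+}=\sum_pa_{lp}$, $A_{lk}=\sum_pa_{lp}\cos(2\pi kp/n)$, $\tilde A_{lk}=\sum_pa_{lp}\sin(2\pi kp/n)$ for $k=1,\dots,\lfloor(n-1)/2\rfloor$, and for even $n$, $A_{l-}=\sum_p(-1)^pa_{lp}$. Suppose these quantities are nonzero for all large $l$ and that the limits $$c_+=\lim_{l\to\infty}\frac{|A_{l+}|}{|A_{l+1,+}|},\quad c_-=\lim_{l\to\infty}\frac{|A_{l-}|}{|A_{l+1,-}|}\ (n\text{ even}),\quad c_k=\lim_{l\to\infty}\frac{(A_{lk}^2+\tilde A_{lk}^2)^{1/2}}{(A_{l+1,k}^2+\tilde A_{l+1,k}^2)^{1/2}}$$ exist in $[0,\infty]$. Then the series converges absolutely (i.e. each of its $n$ real component series converges absolutely) at every $u$ with $|v_+|<c_+$, $|v_-|<c_-$ (for even $n$) and $\rho_k<c_k$ for all $k=1,\dots,\lfloor(n-1)/2\rfloor$.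
   Context: Polar $n$-complex numbers: $u=x_0+h_1x_1+\cdots+h_{n-1}x_{n-1}$, $x_j\in\mathbb{R}$, $h_0=1$, componentwise addition, bilinear multiplication $h_jh_k=h_{(j+k)\bmod n}$. For $u$: $v_+=\sum_px_p$; for even $n$, $v_-=\sum_p(-1)^px_p$; $v_k=\sum_px_p\cos(2\pi kp/n)$, $\tilde v_k=\sum_px_p\sin(2\pi kp/n)$, $\rho_k=\sqrt{v_k^2+\tilde v_k^2}$ for $k=1,\dots,\lfloor(n-1)/2\rfloor$. *)

From Stdlib Require Import Reals Lra Lia.
From Coquelicot Require Import Coquelicot.
Open Scope R_scope.

(* A polar n-complex number x_0 + h_1 x_1 + ... + h_{n-1} x_{n-1} is
   represented by its component function x : nat -> R; only the values
   x 0, ..., x (n-1) are relevant. *)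

Fixpoint sumR (n : nat) (f : nat -> R) : R :=
  match n with
  | O => 0
  | S m => sumR m f + f m
  end.

(* product: h_j h_m = h_{(j+m) mod n} *)
Definition nc_mul (n : nat) (x y : nat -> R) : nat -> R :=
  fun k => sumR n (fun j => sumR n (fun m =>
             if Nat.eqb ((j + m) mod n) k then x j * y m else 0)).

Definition nc_one : nat -> R := fun k => if Nat.eqb k 0 then 1 else 0.

Fixpoint nc_pow (n : nat) (u : nat -> R) (l : nat) : nat -> R :=
  match l with
  | O => nc_one
  | S m => nc_mul n u (nc_pow n u m)
  end.

Definition v_plus (n : nat) (x : nat -> R) : R := sumR n x.
Definition v_minus (n : nat) (x : nat -> R) : R :=
  sumR n (fun p => (-1) ^ p * x p).
Definition v_k (n k : nat) (x : nat -> R) : R :=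
  sumR n (fun p => x p * cos (2 * PI * INR k * INR p / INR n)).
Definition vt_k (n k : nat) (x : nat -> R) : R :=
  sumR n (fun p => x p * sin (2 * PI * INR k * INR p / INR n)).
Definition rho_k (n k : nat) (x : nat -> R) : R :=
  sqrt (v_k n k x ^ 2 + vt_k n k x ^ 2).

(* For each k, x |-> v_k(x) + i vt_k(x) = sum_q x_q e^(2 pi i k q / n) is a ring
   homomorphism from polar n-complex numbers to C, because h_j h_m = h_((j+m) mod n) matches
   e^(2 pi i k j / n) e^(2 pi i k m / n).  Together these n maps form an invertible discrete
   Fourier transform, and the inversion formula gives |x_p| <= (1/n) sum_k rho_k(x).  So the
   p-th component of a_l u^l is dominated by (1/n) sum_(k<n) rho_k(a_l) rho_k(u)^l, and each of
   these n series converges by the ratio test: rho_0 = |v_+|, rho_(n/2) = |v_-| for even n,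
   and rho_(n-k) = rho_k reduces the remaining indices to 1 <= k <= (n-1)/2. *)

From Stdlib Require Import Reals Lra Lia.
From Coquelicot Require Import Coquelicot.
Open Scope R_scope.

Lemma sumR_ext m f g : (forall i, (i < m)%nat -> f i = g i) -> sumR m f = sumR m g.
Proof.
  induction m as [|m IH]; intros Hfg; simpl; [reflexivity|].
  rewrite IH by (intros; apply Hfg; lia). rewrite Hfg by lia. reflexivity.
Qed.

Lemma sumR_const m c : sumR m (fun _ => c) = INR m * c.
Proof. induction m as [|m IH]; simpl sumR; [simpl; ring|]. rewrite IH, S_INR; ring. Qed.

Lemma sumR_plus m f g : sumR m (fun i => f i + g i) = sumR m f + sumR m g.
Proof. induction m as [|m IH]; simpl; [ring|]. rewrite IH; ring. Qed.

Lemma sumR_opp m f : sumR m (fun i => - f i) = - sumR m f.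
Proof. induction m as [|m IH]; simpl; [ring|]. rewrite IH; ring. Qed.

Lemma sumR_mult_l m c f : sumR m (fun i => c * f i) = c * sumR m f.
Proof. induction m as [|m IH]; simpl; [ring|]. rewrite IH; ring. Qed.

Lemma sumR_mult_r m c f : sumR m (fun i => f i * c) = sumR m f * c.
Proof. induction m as [|m IH]; simpl; [ring|]. rewrite IH; ring. Qed.

Lemma sumR_swap m k f :
  sumR m (fun i => sumR k (f i)) = sumR k (fun j => sumR m (fun i => f i j)).
Proof.
  induction m as [|m IH]; simpl.
  - rewrite sumR_const; ring.
  - rewrite IH, <- sumR_plus. reflexivity.
Qed.

Lemma sumR_indicator m s c :
  sumR m (fun i => if Nat.eqb s i then c else 0) = if Nat.ltb s m then c else 0.
Proof.
  induction m as [|m IH]; simpl sumR; [destruct (Nat.ltb_spec s 0); [lia|reflexivity]|].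
  rewrite IH. destruct (Nat.ltb_spec s m), (Nat.eqb_spec s m), (Nat.ltb_spec s (S m));
    try lia; ring.
Qed.

Lemma sumR_le m f g : (forall i, (i < m)%nat -> f i <= g i) -> sumR m f <= sumR m g.
Proof.
  induction m as [|m IH]; intros Hfg; simpl; [lra|].
  apply Rplus_le_compat; [apply IH; intros; apply Hfg|apply Hfg]; lia.
Qed.

Lemma Rabs_sumR_le m f : Rabs (sumR m f) <= sumR m (fun i => Rabs (f i)).
Proof.
  induction m as [|m IH]; simpl; [rewrite Rabs_R0; lra|].
  eapply Rle_trans; [apply Rabs_triang|lra].
Qed.

Lemma ex_series_sumR m (F : nat -> nat -> R) :
  (forall k, (k < m)%nat -> ex_series (F k)) -> ex_series (fun l => sumR m (fun k => F k l)).
Proof.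
  induction m as [|m IH]; intros HF; simpl.
  - apply (ex_series_ext (fun l => 0 ^ S l)); [intros; simpl; ring|].
    apply (ex_series_incr_1 (fun l => 0 ^ l)), ex_series_geom. rewrite Rabs_R0; lra.
  - apply (@ex_series_plus R_AbsRing R_NormedModule);
      [apply IH; intros; apply HF|apply HF]; lia.
Qed.

Fixpoint Csum (m : nat) (f : nat -> C) : C :=
  match m with
  | O => 0%C
  | S m => (Csum m f + f m)%C
  end.

Lemma Csum_ext m f g : (forall i, (i < m)%nat -> f i = g i) -> Csum m f = Csum m g.
Proof.
  induction m as [|m IH]; intros Hfg; simpl; [reflexivity|].
  rewrite IH by (intros; apply Hfg; lia). rewrite Hfg by lia. reflexivity.
Qed.

Lemma Csum_zero m : Csum m (fun _ => 0%C) = 0%C.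
Proof. induction m as [|m IH]; simpl; [reflexivity|]. rewrite IH; ring. Qed.

Lemma Csum_plus m f g : Csum m (fun i => f i + g i)%C = (Csum m f + Csum m g)%C.
Proof. induction m as [|m IH]; simpl; [ring|]. rewrite IH; ring. Qed.

Lemma Csum_mult_l m c f : Csum m (fun i => c * f i)%C = (c * Csum m f)%C.
Proof. induction m as [|m IH]; simpl; [ring|]. rewrite IH; ring. Qed.

Lemma Csum_mult_r m c f : Csum m (fun i => f i * c)%C = (Csum m f * c)%C.
Proof. induction m as [|m IH]; simpl; [ring|]. rewrite IH; ring. Qed.

Lemma Csum_swap m k f :
  Csum m (fun i => Csum k (f i)) = Csum k (fun j => Csum m (fun i => f i j)).
Proof.
  induction m as [|m IH]; simpl; [symmetry; apply Csum_zero|].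
  rewrite IH, <- Csum_plus. reflexivity.
Qed.

Lemma Csum_indicator m s c (g : nat -> C) :
  Csum m (fun i => RtoC (if Nat.eqb s i then c else 0) * g i)%C
  = if Nat.ltb s m then (RtoC c * g s)%C else 0%C.
Proof.
  induction m as [|m IH]; simpl Csum; [destruct (Nat.ltb_spec s 0); [lia|reflexivity]|].
  rewrite IH. destruct (Nat.ltb_spec s m), (Nat.eqb_spec s m), (Nat.ltb_spec s (S m));
    try lia; subst; ring.
Qed.

Lemma Csum_pair m f g : Csum m (fun i => (f i, g i)) = (sumR m f, sumR m g).
Proof. induction m as [|m IH]; simpl; [reflexivity|]. rewrite IH. reflexivity. Qed.

Lemma RtoC_sumR m f : RtoC (sumR m f) = Csum m (fun i => RtoC (f i)).
Proof. induction m as [|m IH]; simpl; [reflexivity|]. rewrite <- IH, RtoC_plus. reflexivity. Qed.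

Lemma Rabs_cos_sin_comb_le v w t : Rabs (v * cos t + w * sin t) <= Cmod (v, w).
Proof.
  unfold Cmod; simpl fst; simpl snd. rewrite <- sqrt_Rsqr_abs. apply sqrt_le_1_alt.
  pose proof (sin2_cos2 t). pose proof (pow2_ge_0 (v * sin t - w * cos t)).
  unfold Rsqr in *. nra.
Qed.

Definition cis (t : R) : C := (cos t, sin t).

Lemma cis_add s t : cis (s + t) = (cis s * cis t)%C.
Proof. unfold cis, Cmult; simpl. rewrite cos_plus, sin_plus. f_equal; ring. Qed.

Lemma cis_period t m : cis (t + 2 * INR m * PI) = cis t.
Proof. unfold cis. rewrite cos_period, sin_period. reflexivity. Qed.

Definition root_angle (n k p : nat) : R := 2 * PI * INR k * INR p / INR n.

Definition nc_fourier (n k : nat) (x : nat -> R) : C := (v_k n k x, vt_k n k x).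

Lemma nc_fourier_Csum n k x :
  nc_fourier n k x = Csum n (fun q => RtoC (x q) * cis (root_angle n k q))%C.
Proof.
  rewrite (Csum_ext _ _ (fun q => (x q * cos (root_angle n k q), x q * sin (root_angle n k q)))).
  - rewrite Csum_pair. reflexivity.
  - intros q _. unfold cis, RtoC, Cmult; simpl. f_equal; ring.
Qed.

Lemma Cmod_nc_fourier n k x : Cmod (nc_fourier n k x) = rho_k n k x.
Proof. reflexivity. Qed.

Lemma Cmod_nc_fourier_0 n x : Cmod (nc_fourier n 0 x) = Rabs (v_plus n x).
Proof.
  unfold nc_fourier, v_k, vt_k, v_plus. simpl INR.
  rewrite (sumR_ext _ (fun p => x p * cos _) x),
    (sumR_ext _ (fun p => x p * sin _) (fun _ => 0)), sumR_const, Rmult_0_r.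
  - apply Cmod_R.
  - intros p _. rewrite Rmult_0_r, Rmult_0_l, Rdiv_0_l, sin_0. ring.
  - intros p _. rewrite Rmult_0_r, Rmult_0_l, Rdiv_0_l, cos_0. ring.
Qed.

Lemma cos_sin_mul_PI p : cos (INR p * PI) = (-1) ^ p /\ sin (INR p * PI) = 0.
Proof.
  induction p as [|p [Hc Hs]].
  - simpl INR. rewrite Rmult_0_l, cos_0, sin_0. simpl; split; reflexivity.
  - rewrite S_INR, Rmult_plus_distr_r, Rmult_1_l, neg_cos, neg_sin, Hc, Hs.
    simpl; split; ring.
Qed.

Lemma Cmod_nc_fourier_half n m x :
  n = (2 * m)%nat -> (0 < m)%nat -> Cmod (nc_fourier n m x) = Rabs (v_minus n x).
Proof.
  intros En Hm.
  assert (Hangle : forall p, 2 * PI * INR m * INR p / INR n = INR p * PI).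
  { intros p. subst n. rewrite mult_INR. simpl INR. field. apply not_0_INR; lia. }
  unfold nc_fourier, v_k, vt_k, v_minus.
  rewrite (sumR_ext _ (fun p => x p * cos _) (fun p => (-1) ^ p * x p)),
    (sumR_ext _ (fun p => x p * sin _) (fun _ => 0)), sumR_const, Rmult_0_r.
  - apply Cmod_R.
  - intros p _. rewrite Hangle, (proj2 (cos_sin_mul_PI p)). ring.
  - intros p _. rewrite Hangle, (proj1 (cos_sin_mul_PI p)). ring.
Qed.

Lemma Cmod_nc_fourier_complement n k k' x :
  (0 < n)%nat -> (k + k')%nat = n -> Cmod (nc_fourier n k' x) = Cmod (nc_fourier n k x).
Proof.
  intros Hn Hkk'.
  assert (Hangle : forall p, 2 * PI * INR k' * INR p / INR n
                             = - (2 * PI * INR k * INR p / INR n) + 2 * INR p * PI).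
  { intros p. replace (INR k') with (INR n - INR k) by (rewrite <- Hkk', plus_INR; ring).
    field. apply not_0_INR; lia. }
  unfold nc_fourier, v_k, vt_k, Cmod; simpl fst; simpl snd.
  rewrite (sumR_ext _ (fun p => x p * cos _) (fun p => x p * cos (2 * PI * INR k * INR p / INR n))),
    (sumR_ext _ (fun p => x p * sin _) (fun p => - (x p * sin (2 * PI * INR k * INR p / INR n)))),
    sumR_opp.
  - f_equal; ring.
  - intros p _. rewrite Hangle, sin_period, sin_neg. ring.
  - intros p _. rewrite Hangle, cos_period, cos_neg. reflexivity.
Qed.

Lemma sin_half_mul_sumR_cos t m :
  2 * sin (t / 2) * sumR m (fun k => cos (INR k * t)) = sin ((INR m - 1/2) * t) + sin (t / 2).
Proof.
  induction m as [|m IH]; simpl sumR.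
  - replace ((INR 0 - 1/2) * t) with (- (t / 2)) by (simpl; field). rewrite sin_neg. ring.
  - rewrite Rmult_plus_distr_l, IH, S_INR.
    replace ((INR m + 1 - 1/2) * t) with (INR m * t + t / 2) by field.
    replace ((INR m - 1/2) * t) with (INR m * t - t / 2) by field.
    rewrite sin_plus, sin_minus. ring.
Qed.

Section Fourier.

Variable n : nat.
Hypothesis n_pos : (0 < n)%nat.

Lemma root_angle_add k p q : root_angle n k (p + q) = root_angle n k p + root_angle n k q.
Proof. unfold root_angle. rewrite plus_INR. field. apply not_0_INR; lia. Qed.

Lemma cis_root_angle_mod k p : cis (root_angle n k (p mod n)) = cis (root_angle n k p).
Proof.
  rewrite <- (cis_period _ (k * (p / n))). f_equal.
  unfold root_angle.
  replace (INR p) with (INR n * INR (p / n) + INR (p mod n))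
    by (rewrite <- mult_INR, <- plus_INR, <- Nat.div_mod_eq; reflexivity).
  rewrite mult_INR. field. apply not_0_INR; lia.
Qed.

Lemma nc_fourier_mul k x y :
  nc_fourier n k (nc_mul n x y) = (nc_fourier n k x * nc_fourier n k y)%C.
Proof.
  rewrite !nc_fourier_Csum. unfold nc_mul.
  transitivity (Csum n (fun j => Csum n (fun m =>
    RtoC (x j * y m) * (cis (root_angle n k j) * cis (root_angle n k m))))%C).
  - rewrite (Csum_ext _ _ (fun r => Csum n (fun j => Csum n (fun m =>
      RtoC (if Nat.eqb ((j + m) mod n) r then x j * y m else 0) * cis (root_angle n k r)))))%C.
    2:{ intros r _. rewrite RtoC_sumR, <- Csum_mult_r. apply Csum_ext. intros j _.
        rewrite RtoC_sumR, <- Csum_mult_r. reflexivity. }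
    rewrite Csum_swap. apply Csum_ext. intros j _.
    rewrite Csum_swap. apply Csum_ext. intros m _.
    rewrite Csum_indicator, cis_root_angle_mod, root_angle_add, cis_add.
    destruct (Nat.ltb_spec ((j + m) mod n) n) as [_|Hge]; [reflexivity|].
    pose proof (Nat.mod_upper_bound (j + m) n); lia.
  - rewrite <- Csum_mult_r. apply Csum_ext. intros j _.
    rewrite <- Csum_mult_l. apply Csum_ext. intros m _.
    rewrite RtoC_mult. ring.
Qed.

Lemma nc_fourier_one k : nc_fourier n k nc_one = 1%C.
Proof.
  rewrite nc_fourier_Csum. unfold nc_one.
  rewrite (Csum_ext _ _ (fun q => RtoC (if Nat.eqb 0 q then 1 else 0) * cis (root_angle n k q))%C)
    by (intros q _; rewrite Nat.eqb_sym; reflexivity).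
  rewrite Csum_indicator. destruct (Nat.ltb_spec 0 n); [|lia].
  unfold root_angle, cis. simpl INR. rewrite Rmult_0_r, Rdiv_0_l, cos_0, sin_0.
  apply Cmult_1_l.
Qed.

Lemma nc_fourier_pow k u l : nc_fourier n k (nc_pow n u l) = Cpow (nc_fourier n k u) l.
Proof.
  induction l as [|l IH]; simpl; [apply nc_fourier_one|].
  rewrite nc_fourier_mul, IH. reflexivity.
Qed.

Lemma sumR_cos_root_angle d : (0 < d < n)%nat -> sumR n (fun k => cos (root_angle n k d)) = 0.
Proof.
  intros Hd. set (t := 2 * PI * INR d / INR n).
  assert (Hn : 0 < INR n) by (apply lt_0_INR; lia).
  assert (Hdn : 0 < INR d < INR n) by (split; [apply lt_0_INR | apply lt_INR]; lia).
  assert (Hhalf : t / 2 = PI * (INR d / INR n)) by (unfold t; field; lra).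
  assert (Hsin : 0 < sin (t / 2)).
  { rewrite Hhalf. pose proof PI_RGT_0.
    assert (0 < INR d / INR n < 1)
      by (split; [apply Rdiv_lt_0_compat | apply Rlt_div_l]; lra).
    apply sin_gt_0; [apply Rmult_lt_0_compat | rewrite <- (Rmult_1_r PI) at 2;
      apply Rmult_lt_compat_l]; lra. }
  (* With t = 2 pi d / n, sin ((n - 1/2) t) = - sin (t / 2), so the telescoped sum vanishes. *)
  assert (Hsum := sin_half_mul_sumR_cos t n).
  replace ((INR n - 1/2) * t) with (- (t / 2) + 2 * INR d * PI) in Hsum by (unfold t; field; lra).
  rewrite sin_period, sin_neg, Rplus_opp_l in Hsum.
  rewrite (sumR_ext _ _ (fun k => cos (INR k * t))) by (intros; unfold root_angle, t; f_equal; field; lra).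
  apply Rmult_integral in Hsum as [H0 | H0]; [lra | exact H0].
Qed.

Lemma sumR_cos_root_angle_diff p q : (p < n)%nat -> (q < n)%nat ->
  sumR n (fun k => cos (root_angle n k q - root_angle n k p)) = if Nat.eqb p q then INR n else 0.
Proof.
  intros Hp Hq. assert (Hn : INR n <> 0) by (apply not_0_INR; lia).
  destruct (Nat.eqb_spec p q) as [<-|Hpq].
  - rewrite (sumR_ext _ _ (fun _ => 1)), sumR_const by (intros; rewrite Rminus_diag, cos_0; reflexivity).
    ring.
  - destruct (Nat.lt_ge_cases p q).
    + rewrite <- (sumR_cos_root_angle (q - p)) by lia. apply sumR_ext. intros k _.
      unfold root_angle. rewrite minus_INR by lia. f_equal. field; auto.
    + rewrite <- (sumR_cos_root_angle (p - q)) by lia. apply sumR_ext. intros k _.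
      rewrite <- cos_neg. unfold root_angle. rewrite minus_INR by lia. f_equal. field; auto.
Qed.

Lemma nc_fourier_inversion x p : (p < n)%nat ->
  INR n * x p = sumR n (fun k => v_k n k x * cos (root_angle n k p)
                               + vt_k n k x * sin (root_angle n k p)).
Proof.
  intros Hp.
  rewrite (sumR_ext _ _ (fun k => sumR n (fun q => x q * cos (root_angle n k q - root_angle n k p)))).
  2:{ intros k _. unfold v_k, vt_k. rewrite <- !sumR_mult_r, <- sumR_plus. apply sumR_ext.
      intros q _. rewrite cos_minus. unfold root_angle. ring. }
  rewrite sumR_swap.
  rewrite (sumR_ext _ _ (fun q => if Nat.eqb p q then x p * INR n else 0)).
  - rewrite sumR_indicator. destruct (Nat.ltb_spec p n); [ring | lia].
  - intros q Hq. rewrite sumR_mult_l, sumR_cos_root_angle_diff by assumption.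
    destruct (Nat.eqb_spec p q) as [<-|]; ring.
Qed.

Lemma Rabs_component_le_sumR_Cmod x p : (p < n)%nat ->
  Rabs (x p) <= / INR n * sumR n (fun k => Cmod (nc_fourier n k x)).
Proof.
  intros Hp. assert (Hn : 0 < INR n) by (apply lt_0_INR; lia).
  assert (Hbound : INR n * Rabs (x p) <= sumR n (fun k => Cmod (nc_fourier n k x))).
  { rewrite <- (Rabs_pos_eq (INR n)) at 1 by lra.
    rewrite <- Rabs_mult, nc_fourier_inversion by assumption.
    eapply Rle_trans; [apply Rabs_sumR_le|].
    apply sumR_le. intros k _. apply Rabs_cos_sin_comb_le. }
  apply Rmult_le_reg_l with (INR n); [lra|].
  rewrite <- Rmult_assoc, Rinv_r, Rmult_1_l by lra. exact Hbound.
Qed.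

Lemma ex_series_Rabs_nc_mul_pow (a : nat -> nat -> R) u :
  (forall k, (k < n)%nat ->
     ex_series (fun l => Cmod (nc_fourier n k (a l)) * Cmod (nc_fourier n k u) ^ l)) ->
  forall p, (p < n)%nat -> ex_series (fun l => Rabs (nc_mul n (a l) (nc_pow n u l) p)).
Proof.
  intros Hser p Hp.
  apply (@ex_series_le R_AbsRing R_CompleteNormedModule _
    (fun l => / INR n * sumR n (fun k => Cmod (nc_fourier n k (a l)) * Cmod (nc_fourier n k u) ^ l))).
  - intros l. change (norm (Rabs ?y)) with (Rabs (Rabs y)). rewrite Rabs_Rabsolu.
    eapply Rle_trans; [apply (Rabs_component_le_sumR_Cmod _ p Hp)|].
    right. f_equal. apply sumR_ext. intros k _.
    rewrite nc_fourier_mul, nc_fourier_pow, Cmod_mult, Cmod_pow. reflexivity.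
  - apply (@ex_series_scal_l R_AbsRing R_NormedModule (/ INR n)), ex_series_sumR, Hser.
Qed.

End Fourier.

Lemma ex_series_mul_pow_of_ratio_lim (b : nat -> R) (c : Rbar) (r : R) :
  (forall l, 0 <= b l) -> 0 <= r -> (exists L, forall l, (L <= l)%nat -> b l <> 0) ->
  is_lim_seq (fun l => b l / b (S l)) c -> Rbar_lt r c ->
  ex_series (fun l => b l * r ^ l).
Proof.
  intros Hb Hr [L HL] Hlim Hrc.
  set (bL m := b (m + L)%nat).
  assert (HbL : forall m, 0 < bL m).
  { intros m. destruct (Hb (m + L)%nat) as [|E]; [assumption|].
    exfalso. apply (HL (m + L)%nat); [lia | symmetry; exact E]. }
  assert (HbL0 : forall m, bL m <> 0) by (intros m; apply Rgt_not_eq, HbL).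
  assert (Hratio : is_lim_seq (fun m => Rabs (bL (S m) / bL m)) (Rbar_inv c)).
  { apply (is_lim_seq_incr_n _ L), is_lim_seq_inv in Hlim; [|intros ->; simpl in Hrc; lra].
    eapply is_lim_seq_ext; [|exact Hlim]. intros m.
    rewrite Rabs_pos_eq by (apply Rlt_le, Rdiv_lt_0_compat; apply HbL).
    change (b (m + L)%nat) with (bL m). change (b (S (m + L))) with (bL (S m)).
    field. split; apply HbL0. }
  assert (Hdisk : CV_disk bL r).
  { destruct c as [c| |]; simpl in Hrc, Hratio; try contradiction.
    - apply (CV_disk_DAlembert _ _ (/ c) HbL0 Hratio). right.
      split; [apply Rinv_neq_0_compat; lra|].
      rewrite Rinv_inv, Rabs_pos_eq; assumption.
    - apply (CV_disk_DAlembert _ _ 0 HbL0 Hratio). left; reflexivity. }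
  apply (ex_series_scal_l (r ^ L)) in Hdisk.
  apply (ex_series_incr_n _ L). revert Hdisk. apply ex_series_ext. intros m.
  assert (0 <= bL m * r ^ m) by (apply Rmult_le_pos; [apply Rlt_le, HbL | apply pow_le, Hr]).
  unfold scal; simpl; unfold mult; simpl. unfold bL in *.
  rewrite Rabs_pos_eq, Nat.add_comm, pow_add by assumption. ring.
Qed.

Lemma fourier_index_cases n k : (2 <= n)%nat -> (k < n)%nat ->
  k = 0%nat \/ (1 <= k <= (n - 1) / 2)%nat \/ (Nat.even n = true /\ n = (2 * k)%nat)
  \/ (1 <= n - k <= (n - 1) / 2)%nat.
Proof.
  intros Hn Hk.
  pose proof (Nat.div_mod (n - 1) 2 ltac:(lia)). pose proof (Nat.mod_upper_bound (n - 1) 2 ltac:(lia)).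
  destruct (Nat.eq_dec n (2 * k)) as [E|E].
  - destruct (Nat.eq_dec k 0); [lia|]. right; right; left.
    split; [apply Nat.even_spec; exists k|]; lia.
  - lia.
Qed.

Theorem mainTheorem14
  (n : nat) (Hn : (2 <= n)%nat)
  (a : nat -> nat -> R)            (* a l = coefficient a_l, a l p = a_{lp} *)
  (cplus cminus : Rbar) (c : nat -> Rbar)
  (Hnz : exists L : nat, forall l : nat, (L <= l)%nat ->
      v_plus n (a l) <> 0
      /\ (Nat.even n = true -> v_minus n (a l) <> 0)
      /\ (forall k : nat, (1 <= k <= (n - 1) / 2)%nat -> rho_k n k (a l) <> 0))
  (Hcplus : is_lim_seq
      (fun l => Rabs (v_plus n (a l)) / Rabs (v_plus n (a (S l)))) cplus)
  (Hcminus : Nat.even n = true -> is_lim_seq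
      (fun l => Rabs (v_minus n (a l)) / Rabs (v_minus n (a (S l)))) cminus)
  (Hck : forall k : nat, (1 <= k <= (n - 1) / 2)%nat -> is_lim_seq
      (fun l => rho_k n k (a l) / rho_k n k (a (S l))) (c k))
  (u : nat -> R)
  (Huplus : Rbar_lt (Finite (Rabs (v_plus n u))) cplus)
  (Huminus : Nat.even n = true -> Rbar_lt (Finite (Rabs (v_minus n u))) cminus)
  (Huk : forall k : nat, (1 <= k <= (n - 1) / 2)%nat ->
      Rbar_lt (Finite (rho_k n k u)) (c k)) :
  forall p : nat, (p < n)%nat ->
    ex_series (fun l => Rabs (nc_mul n (a l) (nc_pow n u l) p)).
Proof.
  destruct Hnz as [L HL].
  assert (Hrho : forall k, (1 <= k <= (n - 1) / 2)%nat ->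
            ex_series (fun l => rho_k n k (a l) * rho_k n k u ^ l)).
  { intros k Hk. apply ex_series_mul_pow_of_ratio_lim with (c k); auto.
    - intros l. apply sqrt_pos.
    - apply sqrt_pos.
    - exists L. intros l Hl. apply (HL l Hl), Hk. }
  apply (ex_series_Rabs_nc_mul_pow n ltac:(lia)). intros k Hk.
  destruct (fourier_index_cases n k Hn Hk) as [-> | [Hk' | [[Hev Hhalf] | Hk']]].
  - apply (ex_series_ext (fun l => Rabs (v_plus n (a l)) * Rabs (v_plus n u) ^ l)).
    { intros l. rewrite !Cmod_nc_fourier_0. reflexivity. }
    apply ex_series_mul_pow_of_ratio_lim with cplus; auto using Rabs_pos.
    exists L. intros l Hl. apply Rabs_no_R0, (HL l Hl).
  - apply Hrho, Hk'.
  - apply (ex_series_ext (fun l => Rabs (v_minus n (a l)) * Rabs (v_minus n u) ^ l)).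
    { intros l. rewrite !(Cmod_nc_fourier_half n k) by lia. reflexivity. }
    apply ex_series_mul_pow_of_ratio_lim with cminus; auto using Rabs_pos.
    exists L. intros l Hl. apply Rabs_no_R0, (HL l Hl), Hev.
  - apply (ex_series_ext (fun l => rho_k n (n - k) (a l) * rho_k n (n - k) u ^ l)).
    { intros l. rewrite <- !Cmod_nc_fourier, !(Cmod_nc_fourier_complement n k (n - k)) by lia.
      reflexivity. }
    apply Hrho, Hk'.
Qed.
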